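(* Let $\mathbb{X},\mathbb{Y}$ be real Banach spaces such that $\operatorname{Sm}\mathbb{X}$ is dense in $\mathbb{X}$. If a non-zero bounded linear operator $T:\mathbb{X}\to\mathbb{Y}$ preserves Birkhoff–James orthogonality at each $x\in\operatorname{Sm}\mathbb{X}$, then $T$ is injective.
   Context: $u\perp_B v$ means $\|u+\lambda v\|\ge\|u\|$ for all real $\lambda$. $T$ preserves Birkhoff–James orthogonality at $x$ if $x\perp_B v$ implies $Tx\perp_B Tv$ for all $v\in\mathbb{X}$. For non-zero $z$, $J(z)=\{f\in\mathbb{X}^*:\|f\|=1,\ f(z)=\|z\|\}$; $z$ is smooth if $J(z)$ is a singleton; $\operatorname{Sm}\mathbb{X}$ is the set of smooth points. *)

From HB Require Import structures.
From mathcomp Require Import all_boot all_order all_algebra.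
From mathcomp Require Import all_classical all_reals all_analysis.
Set Implicit Arguments. Unset Strict Implicit. Unset Printing Implicit Defensive.
Import Order.TTheory GRing.Theory Num.Theory.
Import numFieldNormedType.Exports.
Local Open Scope classical_set_scope.
Local Open Scope ring_scope.

Definition bj_orth (R : realType) (X : normedModType R) (u v : X) : Prop :=
  forall lambda : R, `|u| <= `|u + lambda *: v|.

Definition preserves_bj_at (R : realType) (X Y : normedModType R)
  (T : X -> Y) (x : X) : Prop :=
  forall v : X, bj_orth x v -> bj_orth (T x) (T v).

Definition dual_elt (R : realType) (X : normedModType R) (f : X -> R) : Prop :=
  linear f /\ continuous f.

Definition dual_norm_eq1 (R : realType) (X : normedModType R) (f : X -> R) : Prop :=
  (forall x : X, `|f x| <= `|x|) /\
  (forall r : R, r < 1 -> exists x : X, r * `|x| < `|f x|).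

Definition Jset (R : realType) (X : normedModType R) (z : X) : set (X -> R) :=
  [set f | dual_elt f /\ dual_norm_eq1 f /\ f z = `|z|].

Definition smooth_point (R : realType) (X : normedModType R) (z : X) : Prop :=
  z != 0 /\ exists f, Jset z = [set f].

Definition Sm (R : realType) (X : normedModType R) : set X :=
  [set z | smooth_point z].

From HB Require Import structures.
From mathcomp Require Import all_boot all_order all_algebra.
From mathcomp Require Import all_classical all_reals all_analysis.
From mathcomp Require Import lra.
Import Order.TTheory GRing.Theory Num.Theory.
Import numFieldNormedType.Exports.
Local Open Scope classical_set_scope.
Local Open Scope ring_scope.

(* Suppose [T z = 0] with [z != 0]. Since [T] is continuous and non-zero, some
   smooth [x] close to [z] (closer than [|x|]) has [T x != 0]. The convex map
   [mu |-> |x + mu z|] has a subgradient [g] at [0], and [g != 0] because [x] is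
   close to [z]; a supporting-line argument then gives [x _|_B (c x + z)] for
   [c = - g / |x| != 0]. Preservation yields [T x _|_B T (c x + z) = c T x],
   which forces [T x = 0]. *)

Section NormLine.
Context {R : realType} {X : normedModType R}.

Lemma norm_line_slope_le (x z : X) (mu nu : R) : mu < 0 -> 0 < nu ->
  (`|x + mu *: z| - `|x|) / mu <= (`|x + nu *: z| - `|x|) / nu.
Proof.
move=> mu_lt0 nu_gt0.
have chord : (nu - mu) * `|x| <= nu * `|x + mu *: z| - mu * `|x + nu *: z|.
  have -> : (nu - mu) * `|x| = `|(nu - mu) *: x|.
    by rewrite normrZ ger0_norm // subr_ge0 ltW // (lt_trans mu_lt0).
  have -> : (nu - mu) *: x = nu *: (x + mu *: z) - mu *: (x + nu *: z).
    by rewrite !scalerDr !scalerA mulrC scalerBl opprD addrACA subrr addr0.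
  apply: le_trans (ler_normB _ _) _.
  by rewrite !normrZ (gtr0_norm nu_gt0) (ltr0_norm mu_lt0); lra.
by rewrite ler_ndivrMr // mulrAC ler_pdivrMr //; nra.
Qed.

Lemma norm_line_subgradient (x z : X) :
  exists g : R, forall mu, `|x| + g * mu <= `|x + mu *: z|.
Proof.
pose slopes := [set (`|x + mu *: z| - `|x|) / mu | mu in [set mu : R | mu < 0]].
have slopes_ub : ubound slopes ((`|x + 1 *: z| - `|x|) / 1).
  by move=> _ [mu mu_lt0 <-]; exact: norm_line_slope_le.
have slopes_neq0 : (slopes !=set0).
  by exists ((`|x + (-1) *: z| - `|x|) / (-1)); exists (-1); rewrite /= ?ltrN10.
exists (sup slopes) => mu; case: (ltgtP mu 0) => [mu_lt0|mu_gt0|->].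
- have : (`|x + mu *: z| - `|x|) / mu <= sup slopes.
    by apply: ub_le_sup; [exists ((`|x + 1 *: z| - `|x|) / 1)|exists mu].
  by rewrite ler_ndivrMr //; lra.
- have : sup slopes <= (`|x + mu *: z| - `|x|) / mu.
    by apply: ge_sup => // _ [nu nu_lt0 <-]; exact: norm_line_slope_le.
  by rewrite ler_pdivlMr //; lra.
- by rewrite scale0r addr0 mulr0 addr0.
Qed.

Lemma norm_plane_support {x z : X} {g : R} :
  (forall mu, `|x| + g * mu <= `|x + mu *: z|) ->
  forall s l : R, s * `|x| + g * l <= `|s *: x + l *: z|.
Proof.
move=> hg s l.
have gl_le : g * l <= `|l| * `|z|.
  by have := hg l; have := ler_normD x (l *: z); rewrite normrZ; lra.
case: (ltrP 0 s) => [s_gt0|s_le0].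
- have -> : s *: x + l *: z = s *: (x + (l / s) *: z).
    by rewrite scalerDr scalerA [s * _]mulrC divfK ?gt_eqF.
  have -> : s * `|x| + g * l = s * (`|x| + g * (l / s)).
    by rewrite mulrDr mulrCA [s * (l / s)]mulrC divfK ?gt_eqF.
  by rewrite normrZ gtr0_norm // ler_pM2l.
- have := lerB_normD (l *: z) (s *: x).
  rewrite [l *: z + _]addrC !normrZ (ler0_norm s_le0).
  by have : 0 <= `|x| by []; nra.
Qed.

Lemma distr_lt_norm_half {x z : X} : `|x - z| < `|z| / 2 -> `|x - z| < `|x|.
Proof. by have := ler_normD (z - x) x; rewrite subrK (distrC z x); lra. Qed.

Lemma bj_orth_shift {x z : X} : x != 0 -> `|x - z| < `|x| ->
  exists2 c : R, c != 0 & bj_orth x (c *: x + z).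
Proof.
move=> x_neq0 xz_lt; have x_gt0 : 0 < `|x| by rewrite normr_gt0.
have [g hg] := norm_line_subgradient x z.
have g_neq0 : g != 0.
  by apply/eqP => g0; have := hg (-1); rewrite g0 mul0r addr0 scaleN1r; lra.
pose c := - g / `|x|; have c_normx : c * `|x| = - g by rewrite divfK ?gt_eqF.
exists c; first by rewrite mulf_neq0 ?oppr_eq0 ?invr_eq0 ?normr_eq0.
move=> l; have -> : x + l *: (c *: x + z) = (1 + l * c) *: x + l *: z.
  by rewrite scalerDr scalerA scalerDl scale1r addrA.
apply: le_trans (norm_plane_support hg (1 + l * c) l).
by rewrite mulrDl mul1r -mulrA c_normx; lra.
Qed.

Lemma bj_orth_scale_eq0 (u : X) (c : R) : c != 0 -> bj_orth u (c *: u) -> u = 0.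
Proof.
move=> c_neq0 /(_ (- c^-1)); rewrite scalerA mulNr mulVf // scaleN1r subrr normr0.
by rewrite normr_le0 => /eqP.
Qed.

End NormLine.

Section Operator.
Context {R : realType} {X Y : normedModType R} (T : {linear X -> Y}).

Lemma preserves_bj_at_ker {x z : X} : T z = 0 -> x != 0 -> `|x - z| < `|x| ->
  preserves_bj_at T x -> T x = 0.
Proof.
move=> Tz0 x_neq0 xz_lt hpres; have [c c_neq0 x_orth] := bj_orth_shift x_neq0 xz_lt.
have := hpres _ x_orth; rewrite linearD linearZ Tz0 addr0.
exact: bj_orth_scale_eq0.
Qed.

Lemma ker_near_nonker {z w : X} {e : R} : T z = 0 -> T w != 0 -> 0 < e ->
  exists y : X, `|z - y| < e /\ T y != 0.
Proof.
move=> Tz0 Tw_neq0 e_gt0.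
have w_gt0 : 0 < `|w| by rewrite normr_gt0; apply: contra Tw_neq0 => /eqP ->; rewrite linear0.
pose d := e / (2 * `|w|); have d_gt0 : 0 < d by rewrite divr_gt0 ?mulr_gt0.
exists (z + d *: w); split.
- rewrite opprD addrA subrr add0r normrN normrZ gtr0_norm //.
  by rewrite /d invfM !mulrA mulfVK ?gt_eqF //; lra.
- by rewrite linearD linearZ Tz0 add0r scaler_eq0 negb_or gt_eqF.
Qed.

End Operator.

Theorem mainTheorem4 (R : realType) (X Y : completeNormedModType R)
  (T : {linear X -> Y}) :
  dense (@Sm R X) ->
  continuous T ->
  (exists x : X, T x != 0) ->
  (forall x : X, @Sm R X x -> preserves_bj_at T x) ->
  injective T.
Proof.
move=> Sm_dense T_cont [w Tw_neq0] hpres a b Tab.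
apply/eqP; rewrite -subr_eq0; apply: contraLR isT => z_neq0.
set z := a - b in z_neq0; have Tz0 : T z = 0 by rewrite linearB Tab subrr.
have z_gt0 : 0 < `|z| by rewrite normr_gt0.
pose O := ball z (`|z| / 2) `&` (fun y => `|T y|) @^-1` [set r : R | 0 < r].
have O_open : open O.
  apply: openI; first exact: ball_open.
  apply: open_comp; last exact: open_gt.
  by move=> y _; apply: continuous_comp; [exact: T_cont|exact: norm_continuous].
have O_neq0 : O !=set0.
  have [y [zy_lt Ty_neq0]] := ker_near_nonker T Tz0 Tw_neq0 (divr_gt0 z_gt0 (ltr0Sn R 1)).
  by exists y; split; [rewrite -ball_normE|rewrite /= normr_gt0].
have [x [[xz_lt Tx_gt0] x_smooth]] := Sm_dense O O_neq0 O_open.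
move: xz_lt; rewrite -ball_normE /= distrC => xz_lt.
have x_near_z := distr_lt_norm_half xz_lt.
have x_neq0 : x != 0 by case: x_smooth.
move: Tx_gt0; rewrite /= (preserves_bj_at_ker T Tz0 x_neq0 x_near_z (hpres x x_smooth)).
by rewrite normr0 ltxx.
Qed.
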